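(* Let $R$ be a commutative ring with nonzero identity, $S$ a multiplicatively closed subset of $R$, and $\delta$ an expansion of ideals of $R$; let $\delta_S$ be the expansion of ideals of $S^{-1}R$ given by $\delta_S(S^{-1}I)=S^{-1}(\delta(I))$. Let $I$ be an ideal of $R$. (1) If $I$ is a $\delta$-$n$-ideal of $R$ with $I\cap S=\emptyset$, then $S^{-1}I$ is a $\delta_S$-$n$-ideal of $S^{-1}R$. (2) If $S\cap Z(R)=S\cap Z_{\delta(I)}(R)=\emptyset$ and $S^{-1}I$ is a $\delta_S$-$n$-ideal of $S^{-1}R$, then $I$ is a $\delta$-$n$-ideal of $R$.
   Context: An expansion of ideals of a ring $R$ is a map $\delta$ from the set of ideals of $R$ to itself such that $I\subseteq\delta(I)$ for every ideal $I$, and $\delta(I)\subseteq\delta(J)$ whenever $I\subseteq J$. $\sqrt{0}$ denotes the nilradical of the ring in question. Given an expansion $\delta$ of ideals of a ring $R$, a proper ideal $I$ of $R$ is a $\delta$-$n$-ideal if whenever $a,b\in R$ with $ab\in I$ and $a\notin\sqrt{0}$, then $b\in\delta(I)$. $Z(R)$ denotes the set of zero-divisors of $R$, and for a proper ideal $J$ of $R$, $Z_J(R)=\{r\in R: rs\in J \text{ for some } s\in R\setminus J\}$. *)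

From HB Require Import structures.
From mathcomp Require Import all_boot all_order all_algebra.
Set Implicit Arguments. Unset Strict Implicit. Unset Printing Implicit Defensive.
Import GRing.Theory.
Local Open Scope ring_scope.

Definition is_ideal (T : comPzRingType) (I : T -> Prop) : Prop :=
  [/\ I 0, (forall x y, I x -> I y -> I (x + y)) & (forall r x, I x -> I (r * x))].

Definition in_nilrad (T : comPzRingType) (x : T) : Prop := exists n : nat, x ^+ n = 0.

Definition expansion (T : comPzRingType) (d : (T -> Prop) -> (T -> Prop)) : Prop :=
  (forall I, is_ideal I -> is_ideal (d I)) /\
  (forall I, is_ideal I -> forall x, I x -> d I x) /\
  (forall I J, is_ideal I -> is_ideal J -> (forall x, I x -> J x) ->
       forall x, d I x -> d J x).

Definition delta_n_ideal (T : comPzRingType) (d : (T -> Prop) -> (T -> Prop))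
  (I : T -> Prop) : Prop :=
  [/\ is_ideal I, ~ I 1 &
      forall a b, I (a * b) -> ~ in_nilrad a -> d I b].

Definition mult_closed (T : comPzRingType) (S : T -> Prop) : Prop :=
  S 1 /\ forall s t, S s -> S t -> S (s * t).

Definition zero_divisor (T : comPzRingType) (r : T) : Prop :=
  exists s : T, s != 0 /\ r * s = 0.

Definition ZJ (T : comPzRingType) (J : T -> Prop) (r : T) : Prop :=
  exists s : T, ~ J s /\ J (r * s).

(* f : R -> L is a localization of R at S (L "is" S^{-1}R, f = canonical map) *)
Definition is_localization (R L : comPzRingType) (S : R -> Prop)
  (f : {rmorphism R -> L}) : Prop :=
  [/\ (forall s, S s -> exists t : L, f s * t = 1),
      (forall y : L, exists a s, S s /\ f s * y = f a) &
      (forall a, f a = 0 -> exists s, S s /\ s * a = 0)].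

(* S^{-1} I = { a/s : a in I, s in S } as a subset of L *)
Definition loc_ideal (R L : comPzRingType) (S : R -> Prop)
  (f : {rmorphism R -> L}) (I : R -> Prop) : L -> Prop :=
  fun y => exists a s, I a /\ S s /\ f s * y = f a.

(* Everything reduces to computing with fractions: an element of S^-1 R is
   a/s, and f a = f b holds exactly when s a = s b for some s in S. For (1), if
   (a/s)(b/t) lies in S^-1 I then a (v u b) lies in I for some u, v in S, so
   v u b lies in delta(I) as soon as a is not nilpotent, and b/t = v u b / v u t.
   For (2), when S consists of non-zero-divisors f is injective and reflects
   nilpotency; if a b is in I with a not nilpotent, then f b = c/s with c in
   delta(I), so s b = c, and b must lie in delta(I) since s is not in
   Z_delta(I)(R). Neither part needs d or dS to be expansions, and each uses
   only one inclusion of dS(S^-1 J) = S^-1 d(J). *)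

From mathcomp Require Import all_boot all_order all_algebra.
From mathcomp Require Import ring.
From Stdlib Require Import Classical.

Set Implicit Arguments.
Unset Strict Implicit.
Unset Printing Implicit Defensive.
Import GRing.Theory.
Local Open Scope ring_scope.

Lemma regular_mul_eq0 (R : comPzRingType) (t r : R) :
  ~ zero_divisor t -> t * r = 0 -> r = 0.
Proof. by move=> tNzd trE0; case: (eqVneq r 0) => // rN0; case: tNzd; exists r. Qed.

Section Localization.

Variables (R L : comPzRingType) (S : R -> Prop) (f : {rmorphism R -> L}).
Hypotheses (hS : mult_closed S) (hf : is_localization S f).

Let S1 : S 1 := hS.1.
Let SM {s t} : S s -> S t -> S (s * t) := hS.2 s t.

Let loc_unit {s} : S s -> exists t, f s * t = 1.
Proof. by case: hf => + _ _; apply. Qed.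

Let loc_frac y : exists a s, S s /\ f s * y = f a.
Proof. by case: hf => _ + _; apply. Qed.

Lemma loc_eq a b : f a = f b -> exists2 s, S s & s * a = s * b.
Proof.
case: hf => _ _ ker; move/eqP; rewrite -subr_eq0 -rmorphB => /eqP /ker.
by case=> s [Ss sE0]; exists s => //; apply/eqP; rewrite -subr_eq0 -mulrBr sE0.
Qed.

Lemma loc_ideal_is_ideal I : is_ideal I -> is_ideal (loc_ideal S f I).
Proof.
case=> I0 ID IM; split.
- by exists 0, 1; rewrite rmorph0 mulr0.
- move=> x y [a [s [Ia [Ss xE]]]] [b [t [Ib [St yE]]]].
  exists (t * a + s * b), (s * t); split; first by apply: ID; apply: IM.
  by split; [exact: SM | rewrite rmorphD !rmorphM -xE -yE; ring].
- move=> r x [a [s [Ia [Ss xE]]]]; have [c [u [Su rE]]] := loc_frac r.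
  exists (c * a), (u * s); split; first exact: IM.
  by split; [exact: SM | rewrite !rmorphM -xE -rE; ring].
Qed.

Lemma loc_ideal_rmorph I a : I a -> loc_ideal S f I (f a).
Proof. by exists a, 1; rewrite rmorph1 mul1r. Qed.

Lemma loc_ideal1 I : is_ideal I -> loc_ideal S f I 1 -> exists2 s, S s & I s.
Proof.
case=> _ _ IM [a [s [Ia [Ss sE]]]].
have [t St tsE] : exists2 t, S t & t * s = t * a by apply: loc_eq; rewrite -sE mulr1.
by exists (t * s); [exact: SM | rewrite tsE; apply: IM].
Qed.

Lemma in_nilrad_frac a s x :
  S s -> f s * x = f a -> in_nilrad a -> in_nilrad x.
Proof.
move=> Ss xE [n anE0]; have [w sw1] := loc_unit Ss; exists n.
have -> : x ^+ n = w ^+ n * (f s * x) ^+ n.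
  by rewrite exprMn mulrA -exprMn [w * _]mulrC sw1 expr1n mul1r.
by rewrite xE -rmorphXn anE0 rmorph0 mulr0.
Qed.

Lemma loc_ideal_mul_frac I a s x y : is_ideal I ->
  loc_ideal S f I (x * y) -> f s * x = f a ->
  S s -> exists r w, [/\ I (a * r), S w & f w * y = f r].
Proof.
case=> _ _ IM [c [u [Ic [Su xyE]]]] xE Ss.
have [b [t [St yE]]] := loc_frac y.
have [v Sv vE] : exists2 v, S v & v * (u * a * b) = v * (s * t * c).
  by apply: loc_eq; rewrite !rmorphM -xE -yE -xyE; ring.
exists (v * u * b), (v * u * t); split; last by rewrite !rmorphM -yE; ring.
- have -> : a * (v * u * b) = v * (s * t * c) by rewrite -vE; ring.
  exact: IM (IM _ _ Ic).
- exact: SM (SM Sv Su) St.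
Qed.

Section RegularDenominators.

Hypothesis regS : forall s, S s -> ~ zero_divisor s.

Lemma loc_inj : injective f.
Proof.
move=> a b /loc_eq [s Ss saE]; apply/eqP; rewrite -subr_eq0; apply/eqP.
by apply: (regular_mul_eq0 (regS Ss)); rewrite mulrBr saE subrr.
Qed.

Lemma loc_nilrad_reflect a : in_nilrad (f a) -> in_nilrad a.
Proof. by case=> n fanE0; exists n; apply: loc_inj; rewrite rmorphXn fanE0 rmorph0. Qed.

End RegularDenominators.

Variables (d : (R -> Prop) -> (R -> Prop)) (dS : (L -> Prop) -> (L -> Prop)).

Lemma delta_n_ideal_loc I :
  (forall J, is_ideal J -> forall y, loc_ideal S f (d J) y -> dS (loc_ideal S f J) y) ->
  delta_n_ideal d I -> (forall s, S s -> ~ I s) ->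
  delta_n_ideal dS (loc_ideal S f I).
Proof.
move=> locdS [idI I1N In] IS; split; first exact: loc_ideal_is_ideal.
  by case/(loc_ideal1 idI) => s /IS.
move=> x y xyI xN; apply: locdS => //; have [a [s [Ss xE]]] := loc_frac x.
have [r [w [arI Sw yE]]] := loc_ideal_mul_frac idI xyI xE Ss.
by exists r, w; split=> //; apply: (In _ _ arI) => /(in_nilrad_frac Ss xE).
Qed.

Lemma delta_n_ideal_of_loc I : is_ideal I ->
  (forall J, is_ideal J -> forall y, dS (loc_ideal S f J) y -> loc_ideal S f (d J) y) ->
  (forall s, S s -> ~ zero_divisor s) -> (forall s, S s -> ~ ZJ (d I) s) ->
  delta_n_ideal dS (loc_ideal S f I) -> delta_n_ideal d I.
Proof.
move=> idI dSloc regS SZJ [_ locI1N locIn]; split=> // [I1|a b abI aN].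
  by apply: locI1N; rewrite -(rmorph1 f); exact: loc_ideal_rmorph.
have faN : ~ in_nilrad (f a) by move/(loc_nilrad_reflect regS).
have fabI : loc_ideal S f I (f a * f b) by rewrite -rmorphM; exact: loc_ideal_rmorph.
have [c [s [dIc [Ss sbE]]]] := dSloc I idI _ (locIn _ _ fabI faN).
have scE : s * b = c by apply: (loc_inj regS); rewrite rmorphM.
by apply: NNPP => bN; apply: (SZJ s Ss); exists b; rewrite scE.
Qed.

End Localization.

Theorem proposition2p24
  (R : comNzRingType) (L : comPzRingType) (S : R -> Prop)
  (f : {rmorphism R -> L})
  (d : (R -> Prop) -> (R -> Prop)) (dS : (L -> Prop) -> (L -> Prop))
  (hS : mult_closed S) (hf : is_localization S f) (hd : expansion d)
  (hdS : expansion dS)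
  (hdSdef : forall J, is_ideal J ->
     forall y, dS (loc_ideal S f J) y <-> loc_ideal S f (d J) y)
  (I : R -> Prop) (hI : is_ideal I) :
  (delta_n_ideal d I -> (forall s, S s -> ~ I s) ->
     delta_n_ideal dS (loc_ideal S f I)) /\
  ((forall s, S s -> ~ zero_divisor s) -> (forall s, S s -> ~ ZJ (d I) s) ->
     delta_n_ideal dS (loc_ideal S f I) -> delta_n_ideal d I).
Proof.
split.
- by apply: delta_n_ideal_loc => // J idJ y /hdSdef; apply.
- by apply: delta_n_ideal_of_loc => // J idJ y /hdSdef; apply.
Qed.
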